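(* Let $\lambda\neq0$, $u_0$ smooth and $1$-periodic with $M_0=\max u_0'>0$ attained at the points $\overline\alpha_i$ and $m_0=\min u_0'<0$ attained at the points $\underline\alpha_j$. Let $\eta_*=1/(\lambda M_0)$ if $\lambda>0$ and $\eta_*=1/(\lambda m_0)$ if $\lambda<0$. Then $1-\lambda\eta u_0'(\alpha)>0$ for all $\eta\in[0,\eta_* )$ and $\alpha\in[0,1]$, and for the solution $u$ of $u_{xt}+uu_{xx}-\lambda u_x^2=-(\lambda+1)\int_0^1u_x^2\,dx$, $u(x,0)=u_0$ (periodic), at every time $t$ with $\eta(t)\in[0,\eta_* )$ one has, for all $i,j$, $$M(t)=u_x(\gamma(\overline\alpha_i,t),t),\qquad m(t)=u_x(\gamma(\underline\alpha_j,t),t),$$ and $u_x(\gamma(\alpha_1,t),t)=u_x(\gamma(\alpha_2,t),t)$ if and only if $u_0'(\alpha_1)=u_0'(\alpha_2)$.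
   Context: $\gamma$ is the characteristic: $\dot\gamma=u(\gamma,t)$, $\gamma(\alpha,0)=\alpha$. $M(t)=\sup_\alpha u_x(\gamma(\alpha,t),t)$, $m(t)=\inf_\alpha u_x(\gamma(\alpha,t),t)$. $\eta(t)$ solves $\dot\eta=\left(\int_0^1(1-\lambda\eta u_0'(\alpha))^{-1/\lambda}d\alpha\right)^{-2\lambda}$, $\eta(0)=0$, and along characteristics $u_x(\gamma(\alpha,t),t)=\frac{1}{\lambda\eta\bar{\mathcal K}_0^{2\lambda}}\left(\frac1{\mathcal J}-\frac{\bar{\mathcal K}_1}{\bar{\mathcal K}_0}\right)$ with $\mathcal J(\alpha,t)=1-\lambda\eta(t)u_0'(\alpha)$, $\bar{\mathcal K}_i(t)=\int_0^1\mathcal J^{-i-1/\lambda}d\alpha$. *)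

From Stdlib Require Import Reals Lra.
Open Scope R_scope.

Definition smooth_with_deriv (f df : R -> R) : Prop :=
  exists D : nat -> R -> R,
    D 0%nat = f /\ D 1%nat = df /\
    forall (n : nat) (x : R), derivable_pt_lim (D n) x (D (S n) x).

Definition is_glb (E : R -> Prop) (m : R) : Prop :=
  (forall x, E x -> m <= x) /\ (forall b, (forall x, E x -> b <= x) -> b <= m).

Definition eta_star (lam M0 m0 : R) : R :=
  if Rlt_dec 0 lam then / (lam * M0) else / (lam * m0).

Definition Jf (lam : R) (du0 : R -> R) (eta a : R) : R := 1 - lam * eta * du0 a.

(* The representation formula along characteristics reads
     u_x(gamma(a,t),t) = h_t(u0'(a)),   h_t(v) = (1/(lam eta P)) (1/(1 - lam eta v) - K1/K0),
   with P = K0^(2 lam) > 0.  Whenever 1 - lam eta v > 0, the function h_t is strictly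
   increasing in v (its difference quotient is 1/(P J J') > 0), so u_x(gamma(.,t),t) is a
   strictly increasing function of u0'. *)

From Stdlib Require Import Reals Lra.
Open Scope R_scope.

Lemma J_pos (lam M0 m0 e : R) (du0 : R -> R) :
  (forall a, du0 a <= M0) -> 0 < M0 ->
  (forall a, m0 <= du0 a) -> m0 < 0 ->
  0 <= e < eta_star lam M0 m0 -> forall a, 0 < 1 - lam * e * du0 a.
Proof.
  intros HM HMpos Hm Hmneg [He0 He] a; unfold eta_star in He.
  destruct (Rlt_dec 0 lam) as [Hlam | Hlam].
  - (* lam > 0: the worst point is the maximum M0 of u0' *)
    assert (Hcrit : e * (lam * M0) < 1).
    { replace 1 with (/ (lam * M0) * (lam * M0)) by (field; lra).
      apply Rmult_lt_compat_r; [apply Rmult_lt_0_compat |]; lra. }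
    assert (lam * e * du0 a <= lam * e * M0)
      by (apply Rmult_le_compat_l; [apply Rmult_le_pos | apply HM]; lra).
    lra.
  - (* lam <= 0: for lam = 0 the factor is 1; for lam < 0 the worst point is the minimum m0 *)
    destruct (Req_dec lam 0) as [-> | Hlam0]; [lra |].
    assert (Hpos : 0 < lam * m0) by nra.
    assert (Hcrit : e * (lam * m0) < 1).
    { replace 1 with (/ (lam * m0) * (lam * m0)) by (field; lra).
      apply Rmult_lt_compat_r; lra. }
    assert (lam * e * du0 a <= lam * e * m0)
      by (apply Rmult_le_compat_neg_l; [nra | apply Hm]).
    lra.
Qed.

(* The profile v |-> (1/(k P)) (1/(1 - k v) - K) is strictly increasing where 1 - k v > 0:
   the difference of its values at y and x equals (y - x) / (P (1 - k x) (1 - k y)). *)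
Lemma profile_strict (k P K x y : R) :
  k <> 0 -> 0 < P -> 0 < 1 - k * x -> 0 < 1 - k * y -> x < y ->
  / (k * P) * (/ (1 - k * x) - K) < / (k * P) * (/ (1 - k * y) - K).
Proof.
  intros Hk HP Jx Jy Hxy.
  assert (Hdiff : / (k * P) * (/ (1 - k * y) - K) - / (k * P) * (/ (1 - k * x) - K)
                  = (y - x) / (P * (1 - k * x) * (1 - k * y)))
    by (field; repeat split; lra).
  assert (0 < (y - x) / (P * (1 - k * x) * (1 - k * y))).
  { apply Rdiv_lt_0_compat; [lra |]; repeat apply Rmult_lt_0_compat; lra. }
  lra.
Qed.

Lemma pos_of_pos_derivative (f df : R -> R) (T t : R) :
  f 0 = 0 -> (forall s, 0 <= s < T -> derivable_pt_lim f s (df s)) ->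
  (forall s, 0 < df s) -> 0 < t < T -> 0 < f t.
Proof.
  intros Hf0 Hdf Hpos Ht.
  destruct (MVT_cor2 f df 0 t) as [c [Hmvt _]]; [lra | intros c Hc; apply Hdf; lra |].
  rewrite Hf0 in Hmvt.
  specialize (Hpos c); nra.
Qed.

Lemma initial_slope (u0 du0 : R -> R) (u ux : R -> R -> R) :
  smooth_with_deriv u0 du0 -> (forall x, u x 0 = u0 x) ->
  (forall x, derivable_pt_lim (fun y => u y 0) x (ux x 0)) ->
  forall x, ux x 0 = du0 x.
Proof.
  intros [D [HD0 [HD1 HD]]] Hinit Hux x.
  apply (uniqueness_limite u0 x).
  - apply (derivable_pt_lim_ext (fun y => u y 0)); [exact Hinit | apply Hux].
  - rewrite <- HD0, <- HD1; apply HD.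
Qed.

Lemma monotone_profile_extrema (g du0 : R -> R) (M0 m0 : R) :
  (forall a b, du0 a < du0 b -> g a < g b) ->
  (forall a b, du0 a = du0 b -> g a = g b) ->
  (forall a, du0 a <= M0) -> (forall a, m0 <= du0 a) ->
  (forall abar, du0 abar = M0 -> is_lub (fun y => exists a, y = g a) (g abar)) /\
  (forall aund, du0 aund = m0 -> is_glb (fun y => exists a, y = g a) (g aund)) /\
  (forall a1 a2, g a1 = g a2 <-> du0 a1 = du0 a2).
Proof.
  intros Hlt Heq HM Hm; split; [| split].
  - intros abar Habar; split.
    + intros y [a ->].
      destruct (Rle_lt_or_eq_dec _ _ (HM a)); [left; apply Hlt | right; apply Heq]; lra.
    + intros b Hb; apply Hb; eauto.
  - intros aund Haund; split.
    + intros y [a ->].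
      destruct (Rle_lt_or_eq_dec _ _ (Hm a)); [left; apply Hlt | right; apply Heq]; lra.
    + intros b Hb; apply Hb; eauto.
  - intros a1 a2; split; [| apply Heq]; intros Hg.
    destruct (Rtotal_order (du0 a1) (du0 a2)) as [H | [H | H]]; auto;
      apply Hlt in H; lra.
Qed.

Theorem mainTheorem8
  (lam : R) (u0 du0 : R -> R) (M0 m0 : R)
  (u ux uxx uxt : R -> R -> R) (gam : R -> R -> R) (eta K0 K1 : R -> R) (T : R)
  (* data *)
  (Hlam : lam <> 0)
  (Hu0 : smooth_with_deriv u0 du0)
  (Hper0 : forall x, u0 (x + 1) = u0 x)
  (HM0max : forall a, du0 a <= M0) (HM0att : exists a, du0 a = M0) (HM0pos : 0 < M0)
  (Hm0min : forall a, m0 <= du0 a) (Hm0att : exists a, du0 a = m0) (Hm0neg : m0 < 0)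
  (HT : 0 < T)
  (* u solves the periodic problem on [0,T) *)
  (Hux : forall x t, 0 <= t < T -> derivable_pt_lim (fun y => u y t) x (ux x t))
  (Huxx : forall x t, 0 <= t < T -> derivable_pt_lim (fun y => ux y t) x (uxx x t))
  (Huxt : forall x t, 0 < t < T -> derivable_pt_lim (fun s => ux x s) t (uxt x t))
  (Hper : forall x t, 0 <= t < T -> u (x + 1) t = u x t)
  (Hinit : forall x, u x 0 = u0 x)
  (Hpde : forall x t, 0 < t < T ->
     exists pr : Riemann_integrable (fun y => (ux y t) ^ 2) 0 1,
       uxt x t + u x t * uxx x t - lam * (ux x t) ^ 2 = - (lam + 1) * RiemannInt pr)
  (* characteristics *)
  (Hgam0 : forall a, gam a 0 = a)
  (Hgam : forall a t, 0 <= t < T -> derivable_pt_lim (gam a) t (u (gam a t) t))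
  (* eta and the integrals K0bar, K1bar *)
  (HK0 : forall t, 0 <= t < T -> 0 <= eta t < eta_star lam M0 m0 ->
     exists pr : Riemann_integrable
       (fun a => Rpower (Jf lam du0 (eta t) a) (- (1 / lam))) 0 1,
       K0 t = RiemannInt pr)
  (HK1 : forall t, 0 <= t < T -> 0 <= eta t < eta_star lam M0 m0 ->
     exists pr : Riemann_integrable
       (fun a => Rpower (Jf lam du0 (eta t) a) (- 1 - 1 / lam)) 0 1,
       K1 t = RiemannInt pr)
  (Heta0 : eta 0 = 0)
  (Heta : forall t, 0 <= t < T -> derivable_pt_lim eta t (Rpower (K0 t) (- (2 * lam))))
  (* representation formula along characteristics (where eta > 0) *)
  (Hrep : forall a t, 0 <= t < T -> 0 < eta t < eta_star lam M0 m0 ->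
     ux (gam a t) t =
       / (lam * eta t * Rpower (K0 t) (2 * lam)) * (/ Jf lam du0 (eta t) a - K1 t / K0 t)) :
  (forall e a, 0 <= e < eta_star lam M0 m0 -> 0 <= a <= 1 -> 0 < 1 - lam * e * du0 a) /\
  (forall t, 0 <= t < T -> 0 <= eta t < eta_star lam M0 m0 ->
     (forall abar, du0 abar = M0 ->
        is_lub (fun y => exists a, y = ux (gam a t) t) (ux (gam abar t) t)) /\
     (forall aund, du0 aund = m0 ->
        is_glb (fun y => exists a, y = ux (gam a t) t) (ux (gam aund t) t)) /\
     (forall a1 a2, ux (gam a1 t) t = ux (gam a2 t) t <-> du0 a1 = du0 a2)).
Proof.
  pose proof (fun e => J_pos lam M0 m0 e du0 HM0max HM0pos Hm0min Hm0neg) as HJ.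
  split; [intros e a He _; exact (HJ e He a) |].
  intros t Ht He.
  assert (Hprofile : (forall a b, du0 a < du0 b -> ux (gam a t) t < ux (gam b t) t) /\
                     (forall a b, du0 a = du0 b -> ux (gam a t) t = ux (gam b t) t)).
  { destruct (Req_dec t 0) as [-> | Ht0].
    - assert (Hslope := initial_slope u0 du0 u ux Hu0 Hinit (fun x => Hux x 0 ltac:(lra))).
      split; intros a b Hab; rewrite !Hgam0, !Hslope; exact Hab.
    - assert (Heta_pos : 0 < eta t).
      { apply (pos_of_pos_derivative eta (fun s => Rpower (K0 s) (- (2 * lam))) T t);
          [exact Heta0 | exact Heta | intro s; apply exp_pos | lra]. }
      assert (HP : 0 < Rpower (K0 t) (2 * lam)) by apply exp_pos.
      split; intros a b Hab; rewrite !Hrep by lra; unfold Jf.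
      + apply profile_strict; auto.
        apply Rmult_integral_contrapositive_currified; lra.
      + rewrite Hab; reflexivity. }
  destruct Hprofile as [Hlt Heq].
  exact (monotone_profile_extrema _ du0 M0 m0 Hlt Heq HM0max Hm0min).
Qed.
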